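(* Let $A$ be such that $\mathfrak{g}=\mathfrak{g}(A)$ is finite dimensional and fix $i\in\{1,\dots,\theta\}$. Let $j,k\in\{1,\dots,\theta\}$, both different from $i$, with $j\neq k$. Then $[M_{\alpha_j},N_{\alpha_k}]=0$, i.e. $[x,y]=0$ for all $x\in M_{\alpha_j}$, $y\in N_{\alpha_k}$.
   Context: $\Bbbk$ algebraically closed of characteristic $p>0$; $A=(a_{ab})\in\Bbbk^{\theta\times\theta}$ with $a_{aa}\in\{0,2\}$ and $a_{ab}=0$ iff $a_{ba}=0$ ($a\ne b$). $\mathfrak{g}(A)$ is the contragredient Lie algebra generated by a Cartan subalgebra $\mathfrak{h}$ and $e_a,f_a$ subject to $[h,h']=0$, $[h,e_a]=\xi_a(h)e_a$, $[h,f_a]=-\xi_a(h)f_a$, $[e_a,f_b]=\delta_{ab}h_a$ (with $\xi_b(h_a)=a_{ab}$), modulo the largest graded ideal meeting $\mathfrak{h}$ trivially; $\mathbb{Z}^\theta$-graded with $\deg e_a=\alpha_a=-\deg f_a$. $\varDelta^A_+=\{\beta\in\mathbb{N}_0^\theta\setminus0:\mathfrak{g}_\beta\neq0\}$, root spaces one-dimensional, spanned by fixed $e_\beta$, $f_\beta\in\mathfrak{g}_{-\beta}$. For $j\ne i$, let $d_j\ge1$ be maximal with $\alpha_j+k\alpha_i\in\varDelta^A_+$ for all $0\le k<d_j$; $M_{\alpha_j}=\bigoplus_{k=0}^{d_j-1}\Bbbk e_{\alpha_j+k\alpha_i}$ and $N_{\alpha_j}=\bigoplus_{k=0}^{d_j-1}\Bbbk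 f_{\alpha_j+k\alpha_i}$. *)

From HB Require Import structures.
From mathcomp Require Import all_boot all_order all_algebra.
Set Implicit Arguments. Unset Strict Implicit. Unset Printing Implicit Defensive.
Import GRing.Theory.
Local Open Scope ring_scope.

(* Degrees live in Z^theta, represented as row vectors of integers. *)
Definition simple_root (th : nat) (a : 'I_th) : 'rV[int]_th := delta_mx 0 a.

Definition is_lie_bracket (K : fieldType) (L : vectType K) (br : L -> L -> L) :=
  [/\ (forall c x y z, br (c *: x + y) z = c *: br x z + br y z),
      (forall c x y z, br z (c *: x + y) = c *: br z x + br z y),
      (forall x, br x x = 0) &
      (forall x y z, br x (br y z) + br y (br z x) + br z (br x y) = 0)].

Definition graded_ideal (K : fieldType) (L : vectType K) (th : nat)
    (br : L -> L -> L) (gr : 'rV[int]_th -> {vspace L}) (I : {vspace L}) :=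
  (forall x y, y \in I -> br x y \in I) /\
  exists s : seq 'rV[int]_th, I = (\sum_(b <- s) (I :&: gr b))%VS.

(* L, with bracket br, Cartan subalgebra H, generators e_a f_a, coroots h_a,
   functionals xi_a on H and Z^theta-grading gr, is the contragredient Lie
   algebra g(A): the quotient of the Lie algebra freely generated by H, e_a, f_a
   subject to the defining relations, by the largest graded ideal meeting H
   trivially.  This is characterised by: the relations hold, L is generated by
   H, e, f, the grading is a direct sum decomposition compatible with the
   bracket and the degrees of the generators, and L has no nonzero graded
   ideal meeting H trivially. *)
Definition is_contragredient (K : fieldType) (th : nat) (A : 'M[K]_th)
    (L : vectType K) (br : L -> L -> L) (H : {vspace L})
    (e f h : 'I_th -> L) (xi : 'I_th -> L -> K)
    (gr : 'rV[int]_th -> {vspace L}) : Prop :=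
  is_lie_bracket br /\
      [/\ [/\ [/\ \dim H = (2 * th - \rank A)%N,
          (forall a, h a \in H),
          (forall a c x y, x \in H -> y \in H ->
              xi a (c *: x + y) = c * xi a x + xi a y) &
          (forall a b, xi b (h a) = A a b)],
          (forall c : 'I_th -> K, \sum_a c a *: h a = 0 -> forall a, c a = 0) &
          (forall c : 'I_th -> K,
              (forall x, x \in H -> \sum_a c a * xi a x = 0) -> forall a, c a = 0)],
      [/\ (forall x y, x \in H -> y \in H -> br x y = 0),
          (forall x a, x \in H -> br x (e a) = xi a x *: e a),
          (forall x a, x \in H -> br x (f a) = - (xi a x *: f a)) &
          (forall a b, br (e a) (f b) = if a == b then h a else 0)],
      (forall U : {vspace L}, (H <= U)%VS -> (forall a, e a \in U) ->
          (forall a, f a \in U) ->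
          (forall x y, x \in U -> y \in U -> br x y \in U) -> U = fullv),
      [/\ (forall s : seq 'rV[int]_th, uniq s -> forall v : 'rV[int]_th -> L,
              (forall b, b \in s -> v b \in gr b) ->
              \sum_(b <- s) v b = 0 -> forall b, b \in s -> v b = 0),
          (exists s : seq 'rV[int]_th, fullv = (\sum_(b <- s) gr b)%VS),
          (forall b c x y, x \in gr b -> y \in gr c -> br x y \in gr (b + c)),
          (H <= gr (0%R : 'rV[int]_th))%VS &
          (forall a, e a \in gr (simple_root a) /\ f a \in gr (- simple_root a))] &
      (forall I, graded_ideal br gr I -> (I :&: H = 0)%VS -> I = 0%VS)].

Definition pos_root (K : fieldType) (L : vectType K) (th : nat)
    (gr : 'rV[int]_th -> {vspace L}) (b : 'rV[int]_th) : Prop :=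
  b != 0 /\ (forall a, 0 <= b 0 a) /\ gr b != 0%VS.

Definition string_len (K : fieldType) (L : vectType K) (th : nat)
    (gr : 'rV[int]_th -> {vspace L}) (i j : 'I_th) (d : nat) : Prop :=
  let P := fun d' : nat => forall k, (k < d')%N ->
             pos_root gr (simple_root j + simple_root i *+ k) in
  [/\ (1 <= d)%N, P d & forall d', P d' -> (d' <= d)%N].

(* M_{alpha_j} = sum of the root spaces g_{alpha_j + k alpha_i}, k < d_j
   (each one-dimensional, spanned by e_{alpha_j + k alpha_i}). *)
Definition Mspace (K : fieldType) (L : vectType K) (th : nat)
    (gr : 'rV[int]_th -> {vspace L}) (i j : 'I_th) (d : nat) : {vspace L} :=
  (\sum_(k < d) gr (simple_root j + simple_root i *+ k)%R)%VS.

Definition Nspace (K : fieldType) (L : vectType K) (th : nat)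
    (gr : 'rV[int]_th -> {vspace L}) (i j : 'I_th) (d : nat) : {vspace L} :=
  (\sum_(k < d) gr (- (simple_root j + simple_root i *+ k))%R)%VS.

From HB Require Import structures.
From mathcomp Require Import all_boot all_order all_algebra.
Set Implicit Arguments. Unset Strict Implicit. Unset Printing Implicit Defensive.
Import GRing.Theory Num.Theory.
Local Open Scope ring_scope.

(* The bracket of x in g_(alpha_j + m alpha_i) and y in g_-(alpha_k + n alpha_i)
   lies in the root space of degree alpha_j - alpha_k + (m - n) alpha_i, whose
   alpha_j- and alpha_k-coordinates are 1 and -1.  Such a degree is neither
   nonnegative nor nonpositive, so its root space vanishes by the triangular
   decomposition g = n_- + h + n_+, with n_+ (resp. n_-) graded in nonnegative
   (resp. nonpositive) degrees.  To get the decomposition, observe that the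
   generators normalize n_- + h + n_+; its normalizer is a subalgebra containing
   the generators, hence everything, and then n_- + h + n_+ is itself a
   subalgebra containing the generators. *)

Section LieBracket.
Variables (K : fieldType) (L : vectType K) (br : L -> L -> L).
Hypothesis br_lie : is_lie_bracket br.

Lemma br_linear x : linear (br x).
Proof. by case: br_lie => _ brDr _ _ c u v; rewrite brDr. Qed.

Lemma br_linear_l v : linear (br^~ v).
Proof. by case: br_lie => brDl _ _ _ c u w; rewrite brDl. Qed.

Definition br_lfun x : {linear L -> L} :=
  HB.pack (br x) (GRing.isLinear.Build K L L *:%R (br x) (br_linear x)).
Definition br_lfun_l v : {linear L -> L} :=
  HB.pack (br^~ v) (GRing.isLinear.Build K L L *:%R (br^~ v) (br_linear_l v)).

Definition ad x : 'End(L) := linfun (br_lfun x).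
Definition ad_l v : 'End(L) := linfun (br_lfun_l v).

Lemma adE x v : ad x v = br x v. Proof. by rewrite lfunE. Qed.
Lemma ad_lE v x : ad_l v x = br x v. Proof. by rewrite lfunE. Qed.

Lemma brDr x u v : br x (u + v) = br x u + br x v.
Proof. exact: (linearD (br_lfun x)). Qed.
Lemma brNr x u : br x (- u) = - br x u.
Proof. exact: (linearN (br_lfun x)). Qed.
Lemma brZr x c u : br x (c *: u) = c *: br x u.
Proof. exact: (linearZZ (br_lfun x)). Qed.
Lemma br_sumr x (I : Type) (r : seq I) (P : pred I) (F : I -> L) :
  br x (\sum_(i <- r | P i) F i) = \sum_(i <- r | P i) br x (F i).
Proof. exact: (linear_sum (br_lfun x)). Qed.

Lemma br0l v : br 0 v = 0.
Proof. exact: (linear0 (br_lfun_l v)). Qed.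
Lemma brDl v x y : br (x + y) v = br x v + br y v.
Proof. exact: (linearD (br_lfun_l v)). Qed.
Lemma brZl v c x : br (c *: x) v = c *: br x v.
Proof. exact: (linearZZ (br_lfun_l v)). Qed.
Lemma br_suml v (I : Type) (r : seq I) (P : pred I) (F : I -> L) :
  br (\sum_(i <- r | P i) F i) v = \sum_(i <- r | P i) br (F i) v.
Proof. exact: (linear_sum (br_lfun_l v)). Qed.

Lemma br_anti x y : br x y = - br y x.
Proof.
case: br_lie => _ _ brxx _; apply/eqP; rewrite -addr_eq0.
by have := brxx (x + y); rewrite brDl !brDr !brxx add0r addr0 => ->.
Qed.

Lemma br_jacobi x y z : br x (br y z) = br (br x y) z + br y (br x z).
Proof.
case: br_lie => _ _ _ /(_ x y z) jacobi.
rewrite (br_anti (br x y)) (br_anti x z) brNr; apply/eqP; rewrite -subr_eq0 -jacobi.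
by rewrite opprB opprK addrA.
Qed.

Lemma br_addv x (U W V : {vspace L}) :
    (forall u, u \in U -> br x u \in V) -> (forall w, w \in W -> br x w \in V) ->
  forall v, v \in (U + W)%VS -> br x v \in V.
Proof. by move=> xU xW _ /memv_addP [u /xU Uu [w /xW Ww ->]]; rewrite brDr memvD. Qed.

Section BracketSpan.
Variables (th : nat) (g : 'I_th -> L).

(* Right-normed brackets of at most n+1 generators; once stable, this is the
   subalgebra generated by the [g a] (n_+ for [g = e], n_- for [g = f]). *)
Fixpoint bracket_span n : {vspace L} :=
  if n is m.+1 then (bracket_span m + \sum_(a < th) (ad (g a) @: bracket_span m))%VS
  else <<codom g>>%VS.

Lemma bracket_span_le m n : (m <= n)%N -> (bracket_span m <= bracket_span n)%VS.
Proof.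
apply: (@homo_leq _ _ (fun U V => is_true (U <= V)%VS)) => [U | V U W | k].
- exact: subvv.
- exact: subv_trans.
- exact: addvSl.
Qed.

Lemma bracket_span_stabilizes : exists N, (bracket_span N.+1 <= bracket_span N)%VS.
Proof.
have grow n : (exists2 N, (N < n)%N & (bracket_span N.+1 <= bracket_span N)%VS)
              \/ (n <= \dim (bracket_span n))%N.
  elim: n => [|n [[N ltNn stN] | le_n_dim]]; first by right.
    by left; exists N => //; apply: ltnW.
  have [stn | nstn] := boolP (bracket_span n.+1 <= bracket_span n)%VS.
    by left; exists n.
  right; apply: leq_ltn_trans le_n_dim _.
  by rewrite (ltn_leqif (dimv_leqif_sup (addvSl _ _))).
have [[N _ stN] | ] := grow (dim L).+1; first by exists N.
by rewrite ltnNge -dimvf dimvS ?subvf.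
Qed.

Lemma bracket_span_gen n a : g a \in bracket_span n.
Proof. exact: subvP (bracket_span_le (leq0n n)) _ (memv_span (codom_f g a)). Qed.

Variable N : nat.
Hypothesis stableN : (bracket_span N.+1 <= bracket_span N)%VS.

Lemma bracket_span_ad_gen a x : x \in bracket_span N -> br (g a) x \in bracket_span N.
Proof.
move=> Wx; apply: (subvP stableN); apply: (subvP (addvSr _ _)).
by apply: (subvP (sumv_sup a isT (subvv _))); rewrite -adE memv_img.
Qed.

Lemma bracket_span_ind (U : {vspace L}) :
    (forall a, g a \in U) ->
    (forall a x, x \in bracket_span N -> x \in U -> br (g a) x \in U) ->
  (bracket_span N <= U)%VS.
Proof.
move=> gU adU; suff: forall n, (n <= N)%N -> (bracket_span n <= U)%VS by apply.
elim=> [_ | n IHn lt_nN] /=; first by apply/span_subvP => _ /codomP [a ->].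
have sWU := IHn (ltnW lt_nN); rewrite subv_add sWU; apply/subv_sumP => a _.
apply/subvP => _ /memv_imgP [x Wx ->]; rewrite adE adU ?(subvP sWU) //.
exact: subvP (bracket_span_le (ltnW lt_nN)) _ Wx.
Qed.

End BracketSpan.

(* Used for (g, g', hh, chi) = (e, f, h, xi) and for (f, e, -h, -xi). *)
Section CartanAction.
Variables (th : nat) (H : {vspace L}) (g g' hh : 'I_th -> L) (chi : 'I_th -> L -> K).
Hypotheses (hh_H : forall a, hh a \in H)
  (br_H_g : forall x a, x \in H -> br x (g a) = chi a x *: g a)
  (br_g'_g : forall a b, br (g' a) (g b) = if a == b then hh a else 0).
Variable N : nat.
Hypothesis stableN : (bracket_span g N.+1 <= bracket_span g N)%VS.

Lemma bracket_span_cartan x v :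
  x \in H -> v \in bracket_span g N -> br x v \in bracket_span g N.
Proof.
move=> Hx Wv; rewrite -adE memv_preim; move: v Wv; apply/subvP.
apply: bracket_span_ind => [a | a v Wv]; rewrite -!memv_preim !adE.
  by rewrite br_H_g // memvZ ?bracket_span_gen.
by move=> Wxv; rewrite br_jacobi br_H_g // brZl memvD ?memvZ ?bracket_span_ad_gen.
Qed.

Lemma bracket_span_opposite a v :
  v \in bracket_span g N -> br (g' a) v \in (bracket_span g N + H)%VS.
Proof.
move=> Wv; rewrite -adE memv_preim; move: v Wv; apply/subvP.
apply: bracket_span_ind => [b | b v Wv]; rewrite -!memv_preim !adE.
  by rewrite br_g'_g; case: eqP => _; rewrite ?mem0v ?(subvP (addvSr _ _)).
rewrite br_jacobi => /memv_addP [w Ww [y Hy ->]].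
rewrite br_g'_g brDr (br_anti (g b) y) br_H_g //.
rewrite memvD // ?(subvP (addvSl _ _)) ?memvD ?memvN ?memvZ ?bracket_span_ad_gen
  ?bracket_span_gen //.
by case: eqP => _; rewrite ?br0l ?mem0v ?(subvP (addvSl _ _)) ?bracket_span_cartan.
Qed.

End CartanAction.

(* {x | [x, V] <= V}, cut out by the conditions [x, v] \in V for [v] ranging
   over a basis of [V]. *)
Definition normalizer (V : {vspace L}) : {vspace L} :=
  (\bigcap_(l < \dim V) (ad_l (vbasis V)`_l @^-1: V))%VS.

Lemma normalizerP (V : {vspace L}) x :
  reflect (forall v, v \in V -> br x v \in V) (x \in normalizer V).
Proof.
apply: (iffP idP) => [nVx v Vv | xV].
  rewrite (coord_vbasis Vv) br_sumr memv_suml // => l _; rewrite brZr memvZ //.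
  move: nVx; rewrite memvE => /subv_bigcapP/(_ l isT).
  by rewrite -memvE -memv_preim ad_lE.
rewrite memvE; apply/subv_bigcapP => l _; rewrite -memvE -memv_preim ad_lE.
by apply/xV/vbasis_mem/mem_nth; rewrite size_tuple.
Qed.

Lemma normalizer_br (V : {vspace L}) x y :
  x \in normalizer V -> y \in normalizer V -> br x y \in normalizer V.
Proof.
move=> /normalizerP xV /normalizerP yV; apply/normalizerP => v Vv.
have -> : br (br x y) v = br x (br y v) - br y (br x v) by rewrite br_jacobi addrK.
by apply: memvB; [apply/xV/yV | apply/yV/xV].
Qed.

Section TriangularDecomposition.
Variables (th : nat) (H : {vspace L}) (e f h : 'I_th -> L) (xi : 'I_th -> L -> K).
Hypotheses (h_H : forall a, h a \in H)
  (br_HH : forall x y, x \in H -> y \in H -> br x y = 0)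
  (br_He : forall x a, x \in H -> br x (e a) = xi a x *: e a)
  (br_Hf : forall x a, x \in H -> br x (f a) = - (xi a x *: f a))
  (br_ef : forall a b, br (e a) (f b) = if a == b then h a else 0)
  (generated : forall U : {vspace L}, (H <= U)%VS -> (forall a, e a \in U) ->
     (forall a, f a \in U) -> (forall x y, x \in U -> y \in U -> br x y \in U) ->
     U = fullv).

Lemma normalized_by_generators (V : {vspace L}) :
    (H <= V)%VS -> (forall a, e a \in V) -> (forall a, f a \in V) ->
    (forall x, x \in H -> x \in normalizer V) ->
    (forall a, e a \in normalizer V) -> (forall a, f a \in normalizer V) ->
  V = fullv.
Proof.
move=> HV eV fV HnV enV fnV.
have nV_full : normalizer V = fullv.
  by apply: generated => //; [apply/subvP | exact: normalizer_br].
apply: generated => // x y _ Vy.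
have /normalizerP xV : x \in normalizer V by rewrite nV_full memvf.
exact: xV.
Qed.

Variables (Ne Nf : nat).
Hypotheses (stable_e : (bracket_span e Ne.+1 <= bracket_span e Ne)%VS)
  (stable_f : (bracket_span f Nf.+1 <= bracket_span f Nf)%VS).

Lemma triangular_decomposition :
  (bracket_span f Nf + H + bracket_span e Ne)%VS = fullv.
Proof.
set Nm := bracket_span f Nf; set Np := bracket_span e Ne; set V := (Nm + H + Np)%VS.
have NmHV : (Nm + H <= V)%VS by apply: addvSl.
have NmV : (Nm <= V)%VS by apply: subv_trans (addvSl _ _) NmHV.
have HV : (H <= V)%VS by apply: subv_trans (addvSr _ _) NmHV.
have NpV : (Np <= V)%VS by apply: addvSr.
have NpHV : (Np + H <= V)%VS by rewrite subv_add NpV HV.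
have br_H_f x a : x \in H -> br x (f a) = - xi a x *: f a.
  by move=> Hx; rewrite br_Hf // scaleNr.
have br_f_e a b : br (f a) (e b) = if a == b then - h a else 0.
  by rewrite br_anti br_ef eq_sym; case: eqP => [->|]; rewrite ?oppr0.
have mNh a : - h a \in H by rewrite memvN.
have normalizes x : (forall m, m \in Nm -> br x m \in V) ->
    (forall y, y \in H -> br x y \in V) -> (forall n, n \in Np -> br x n \in V) ->
  x \in normalizer V.
  by move=> xNm xH xNp; apply/normalizerP; apply: br_addv => //; apply: br_addv.
apply: normalized_by_generators => [|a|a|x Hx|a|a].
- exact: HV.
- exact: subvP NpV _ (bracket_span_gen _ _ _).
- exact: subvP NmV _ (bracket_span_gen _ _ _).
- apply: normalizes => [m Nm_m|y Hy|n Np_n].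
  + exact: subvP NmV _ (bracket_span_cartan br_H_f stable_f Hx Nm_m).
  + by rewrite br_HH ?mem0v.
  + exact: subvP NpV _ (bracket_span_cartan br_He stable_e Hx Np_n).
- apply: normalizes => [m Nm_m|y Hy|n Np_n].
  + exact: subvP NmHV _ (bracket_span_opposite h_H br_H_f br_ef stable_f a Nm_m).
  + by rewrite br_anti br_He // memvN memvZ // (subvP NpV) ?bracket_span_gen.
  + exact: subvP NpV _ (bracket_span_ad_gen stable_e a Np_n).
- apply: normalizes => [m Nm_m|y Hy|n Np_n].
  + exact: subvP NmV _ (bracket_span_ad_gen stable_f a Nm_m).
  + by rewrite br_anti br_Hf // opprK memvZ // (subvP NmV) ?bracket_span_gen.
  + exact: subvP NpHV _ (bracket_span_opposite mNh br_He br_f_e stable_e a Np_n).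
Qed.

End TriangularDecomposition.

End LieBracket.

Lemma memv_sum_uniq (K : fieldType) (L : vectType K) (I : eqType) (r : seq I)
    (P : pred I) (U : I -> {vspace L}) z :
  uniq r -> z \in (\sum_(i <- r | P i) U i)%VS ->
  exists2 v : I -> L, (forall i, v i \in U i) & z = \sum_(i <- r | P i) v i.
Proof.
elim: r z => [z _ | c r IHr z /= /andP [c_r uniq_r]].
  rewrite big_nil memv0 => /eqP ->.
  by exists (fun _ => 0) => [i|]; rewrite ?mem0v ?big_nil.
rewrite big_cons; have [P_c | nP_c] := boolP (P c); last first.
  by move=> /(IHr _ uniq_r) [v Uv ->]; exists v; rewrite // big_cons (negbTE nP_c).
move=> /memv_addP [u Uu [w /(IHr _ uniq_r) [v Uv ->] ->]].
exists (fun i => if i == c then u else v i) => [i | ]; first by case: eqP => [->|].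
rewrite big_cons P_c eqxx; congr (_ + _); rewrite big_mkcond [RHS]big_mkcond.
by apply: eq_big_seq => i r_i; case: eqP => // eq_ic; rewrite -eq_ic r_i in c_r.
Qed.

Definition nonneg_deg {th : nat} (c : 'rV[int]_th) := [forall a, 0 <= c 0 a].
Definition sign_definite {th : nat} (c : 'rV[int]_th) := nonneg_deg c || nonneg_deg (- c).

Lemma nonneg_deg_simple_root th (a : 'I_th) : nonneg_deg (simple_root a).
Proof. by apply/forallP => b; rewrite mxE ler0n. Qed.

Lemma nonneg_degD th (c d : 'rV[int]_th) :
  nonneg_deg c -> nonneg_deg d -> nonneg_deg (c + d).
Proof.
by move=> /forallP c_ge0 /forallP d_ge0; apply/forallP => a; rewrite mxE addr_ge0.
Qed.

Section Grading.
Variables (K : fieldType) (L : vectType K) (th : nat).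
Variables (gr : 'rV[int]_th -> {vspace L}) (s : seq 'rV[int]_th).
Hypotheses (uniq_s : uniq s)
  (gr_indep : forall r : seq 'rV[int]_th, uniq r -> forall v : 'rV[int]_th -> L,
     (forall b, b \in r -> v b \in gr b) ->
     \sum_(b <- r) v b = 0 -> forall b, b \in r -> v b = 0)
  (gr_full : fullv = (\sum_(b <- s) gr b)%VS).

Definition graded_part (P : pred 'rV[int]_th) := (\sum_(b <- s | P b) gr b)%VS.

Lemma graded_part_disjoint P d z :
  d \notin [seq b <- s | P b] -> z \in gr d -> z \in graded_part P -> z = 0.
Proof.
move=> d_notP gr_z /(memv_sum_uniq uniq_s) [v gr_v def_z].
pose w b := if b == d then z else - v b.
suff: w d = 0 by rewrite /w eqxx.
apply: (@gr_indep (d :: [seq b <- s | P b])); last exact: mem_head.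
- by rewrite /= d_notP filter_uniq.
- by move=> b _; rewrite /w; case: eqP => [->|_]; rewrite ?memvN.
rewrite big_cons {1}/w eqxx (eq_big_seq (fun b => - v b)).
  by rewrite big_filter sumrN -def_z subrr.
by move=> b P_b; rewrite /w; case: eqP => // eq_bd; rewrite -eq_bd P_b in d_notP.
Qed.

Lemma gr_notin_eq0 d z : d \notin s -> z \in gr d -> z = 0.
Proof.
move=> s_d gr_z; apply: (graded_part_disjoint (P := xpredT) _ gr_z).
  by rewrite filter_predT.
by rewrite /graded_part -gr_full memvf.
Qed.

Lemma sub_graded_part (P : pred 'rV[int]_th) d : P d -> (gr d <= graded_part P)%VS.
Proof.
move=> P_d; apply/subvP => z gr_z; have [s_d | s_d] := boolP (d \in s).
  by rewrite /graded_part (big_rem d) //= P_d (subvP (addvSl _ _)).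
by rewrite (gr_notin_eq0 s_d gr_z) mem0v.
Qed.

Lemma graded_part_sub (P Q : pred 'rV[int]_th) :
  (forall b, P b -> Q b) -> (graded_part P <= graded_part Q)%VS.
Proof.
move=> PQ; rewrite {1}/graded_part.
apply: (big_ind (fun U => U <= graded_part Q)%VS) => [|U W sU sW|b /PQ].
- exact: sub0v.
- by rewrite subv_add sU.
- exact: sub_graded_part.
Qed.

Variable br : L -> L -> L.
Hypotheses (br_lie : is_lie_bracket br)
  (br_gr : forall b c x y, x \in gr b -> y \in gr c -> br x y \in gr (b + c)).

Lemma br_graded_part (P : pred 'rV[int]_th) c x v :
    (forall b, P b -> P (c + b)) -> x \in gr c ->
  v \in graded_part P -> br x v \in graded_part P.
Proof.
move=> P_c gr_x; rewrite -(adE br_lie) memv_preim; move: v; apply/subvP.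
set T := (ad br_lie x @^-1: _)%VS; rewrite {1}/graded_part.
apply: (big_ind (fun U => U <= T)%VS) => [|U W sU sW|b P_b].
- exact: sub0v.
- by rewrite subv_add sU.
apply/subvP => y gr_y; rewrite -memv_preim adE.
exact: subvP (sub_graded_part (P_c b P_b)) _ (br_gr gr_x gr_y).
Qed.

Lemma bracket_span_graded {m : nat} (deg : 'I_m -> 'rV[int]_th) (g : 'I_m -> L)
    (P : pred 'rV[int]_th) N :
    (forall a, g a \in gr (deg a)) -> (forall a, P (deg a)) ->
    (forall a b, P b -> P (deg a + b)) ->
  (bracket_span br_lie g N <= graded_part P)%VS.
Proof.
move=> gr_g P_deg P_add; apply: bracket_span_ind => [a | a x _ Px].
  exact: subvP (sub_graded_part (P_deg a)) _ (gr_g a).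
exact: br_graded_part (P_add a) (gr_g a) Px.
Qed.

Lemma triangle_sign_definite (H : {vspace L}) (e f : 'I_th -> L) Ne Nf :
    (H <= gr 0)%VS -> (forall a, e a \in gr (simple_root a)) ->
    (forall a, f a \in gr (- simple_root a)) ->
  (bracket_span br_lie f Nf + H + bracket_span br_lie e Ne
     <= graded_part sign_definite)%VS.
Proof.
move=> H_gr0 gr_e gr_f.
have pos : (bracket_span br_lie e Ne <= graded_part nonneg_deg)%VS.
  apply: (bracket_span_graded (deg := @simple_root th)) => [a|a|a c].
  - exact: gr_e.
  - exact: nonneg_deg_simple_root.
  - exact/nonneg_degD/nonneg_deg_simple_root.
have neg : (bracket_span br_lie f Nf <= graded_part (fun c => nonneg_deg (- c)))%VS.
  apply: (bracket_span_graded (deg := fun a => - simple_root a)) => [a|a|a c].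
  - exact: gr_f.
  - by rewrite opprK nonneg_deg_simple_root.
  - by rewrite opprD opprK; apply/nonneg_degD/nonneg_deg_simple_root.
rewrite !subv_add -andbA; apply/and3P; split.
- apply: (subv_trans neg); apply: graded_part_sub => c.
  by rewrite /sign_definite orbC => ->.
- apply: (subv_trans H_gr0); apply: sub_graded_part.
  by rewrite /sign_definite oppr0 orbb; apply/forallP => a; rewrite mxE.
- apply: (subv_trans pos); apply: graded_part_sub => c.
  by rewrite /sign_definite => ->.
Qed.

End Grading.

Lemma string_deg_indefinite th (i j k : 'I_th) m n :
  j != i -> k != i -> j != k ->
  ~~ sign_definite (simple_root j + simple_root i *+ m
                    - (simple_root k + simple_root i *+ n)).
Proof.
move=> ji ki jk; set c := (_ - _).
have c_j : c 0 j = 1.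
  rewrite /c !mxE !mulmxnE !mxE !eqxx (negbTE ji) (negbTE jk) /=.
  by rewrite !mul0rn !addr0.
have c_k : c 0 k = -1.
  rewrite /c !mxE !mulmxnE !mxE !eqxx (negbTE ki) eq_sym (negbTE jk) /=.
  by rewrite !mul0rn !addr0 !add0r.
rewrite /sign_definite /nonneg_deg negb_or !negb_forall; apply/andP; split; apply/existsP.
  by exists k; rewrite c_k.
by exists j; rewrite mxE c_j.
Qed.

Lemma root_space_sign_indefinite (K : fieldType) th (A : 'M[K]_th) (L : vectType K)
    (br : L -> L -> L) (H : {vspace L}) (e f h : 'I_th -> L) (xi : 'I_th -> L -> K)
    (gr : 'rV[int]_th -> {vspace L}) (b : 'rV[int]_th) :
  is_contragredient A br H e f h xi gr -> ~~ sign_definite b -> gr b = 0%VS.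
Proof.
case=> br_lie [[[_ h_H _ _] _ _] [br_HH br_He br_Hf br_ef] generated
  [gr_indep [s gr_full] br_gr H_gr0 gr_ef] _] indef_b.
have [Ne stable_e] := bracket_span_stabilizes br_lie e.
have [Nf stable_f] := bracket_span_stabilizes br_lie f.
have uniq_s := undup_uniq s.
have full_s : fullv = (\sum_(c <- undup s) gr c)%VS.
  by rewrite big_undup ?gr_full //; apply: addvv.
have := triangle_sign_definite uniq_s gr_indep full_s br_lie br_gr Ne Nf H_gr0
  (fun a => (gr_ef a).1) (fun a => (gr_ef a).2).
rewrite (triangular_decomposition h_H br_HH br_He br_Hf br_ef generated stable_e
  stable_f) => /subvP full_S.
apply/eqP; rewrite -subv0; apply/subvP => z gr_z; rewrite memv0; apply/eqP.
apply: (graded_part_disjoint uniq_s gr_indep _ gr_z (full_S z (memvf z))).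
by rewrite mem_filter negb_and indef_b.
Qed.

Theorem lemma4p10 (K : closedFieldType) (p : nat) (th : nat) (A : 'M[K]_th)
    (L : vectType K) (br : L -> L -> L) (H : {vspace L})
    (e f h : 'I_th -> L) (xi : 'I_th -> L -> K)
    (gr : 'rV[int]_th -> {vspace L}) (i j k : 'I_th) (dj dk : nat) :
  prime p -> p \in [pchar K] ->
  (forall a, A a a = 0 \/ A a a = 2) ->
  (forall a b, a != b -> (A a b == 0) = (A b a == 0)) ->
  is_contragredient A br H e f h xi gr ->
  j != i -> k != i -> j != k ->
  string_len gr i j dj -> string_len gr i k dk ->
  forall x y, x \in Mspace gr i j dj -> y \in Nspace gr i k dk -> br x y = 0.
Proof.
(* Neither the characteristic, nor the shape of [A], nor the string lengths
   matter: the claim holds in any contragredient algebra over any field. *)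
move=> _ _ _ _ gA ji ki jk _ _ x y /memv_sumP [xs gr_xs ->] /memv_sumP [ys gr_ys ->].
have [br_lie [_ _ _ [_ _ br_gr _ _] _]] := gA.
rewrite (br_suml br_lie) big1 // => m _; rewrite (br_sumr br_lie) big1 // => n _.
have indef := string_deg_indefinite m n ji ki jk.
apply/eqP; rewrite -memv0 -(root_space_sign_indefinite gA indef).
exact: br_gr (gr_xs m isT) (gr_ys n isT).
Qed.
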